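(* Let $\mathsf{SafeInstance} \subseteq \mathbb{N}$ contain at least two elements. Then there is no metalanguage capturing the property $\psi(g)$: ''$g$ halts on every input and outputs an element of $\mathsf{SafeInstance}$'', i.e. $\psi(g) \leftrightarrow \forall x\,(\varphi_g(x)\downarrow \wedge \varphi_g(x) \in \mathsf{SafeInstance})$.
   Context: Programs (generators) are identified with natural numbers in a fixed universal programming language; $\varphi_g$ is the partial computable function computed by $g$ and $\varphi_g(x)\downarrow$ means $g$ halts on $x$. A metalanguage $L \subseteq \mathbb{N}$ captures a property $\psi$ if $L$ is decidable, every $g \in L$ satisfies $\psi$, and for every $g' \in \mathbb{N}$ satisfying $\psi$ there is $g \in L$ with $\varphi_g = \varphi_{g'}$. *)

From Stdlib Require Import Arith Cantor.
From mathcomp Require Import ssreflect ssrfun ssrbool eqtype ssrnat seq choice.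

Set Implicit Arguments.
Unset Strict Implicit.

(* A fixed universal programming language: unary partial recursive          *)
(* functions on nat, with tuples encoded by the Cantor pairing of           *)
(* Stdlib.Arith.Cantor (pair x y := Cantor.to_nat (x, y)).                  *)

Definition cpair (x y : nat) : nat := Cantor.to_nat (x, y).
Definition cfst (n : nat) : nat := fst (Cantor.of_nat n).
Definition csnd (n : nat) : nat := snd (Cantor.of_nat n).

Inductive prog : Type :=
  | PZero
  | PSucc
  | PId
  | PFst
  | PSnd
  | PComp of prog & prog
  | PPair of prog & prog
  | PRec of prog & prog
  | PMu of prog.

(* PRec f g on input <n,y>:  R 0 = f y,  R (n+1) = g <<n, R n>, y>. *)
Inductive eval : prog -> nat -> nat -> Prop :=
  | ev_zero x : eval PZero x 0
  | ev_succ x : eval PSucc x (S x)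
  | ev_id x : eval PId x x
  | ev_fst x : eval PFst x (cfst x)
  | ev_snd x : eval PSnd x (csnd x)
  | ev_comp f g x u v : eval g x u -> eval f u v -> eval (PComp f g) x v
  | ev_pair f g x a b : eval f x a -> eval g x b -> eval (PPair f g) x (cpair a b)
  | ev_rec f g x v : evalrec f g (cfst x) (csnd x) v -> eval (PRec f g) x v
  | ev_mu f x n :
      eval f (cpair n x) 0 ->
      (forall m, m < n -> exists k, eval f (cpair m x) (S k)) ->
      eval (PMu f) x n
with evalrec : prog -> prog -> nat -> nat -> nat -> Prop :=
  | evr_0 f g y v : eval f y v -> evalrec f g 0 y v
  | evr_S f g n y r v :
      evalrec f g n y r -> eval g (cpair (cpair n r) y) v ->
      evalrec f g (S n) y v.

(* Goedel numbering: programs are coded as generic trees, which MathComp     *)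
(* numbers bijectively-onto-their-image via pickle/unpickle.  Every natural  *)
(* number denotes a program (junk codes denote PZero), and every program has *)
(* a code.                                                                   *)

Fixpoint prog_to_tree (p : prog) : GenTree.tree nat :=
  match p with
  | PZero => GenTree.Node 0 [::]
  | PSucc => GenTree.Node 1 [::]
  | PId => GenTree.Node 2 [::]
  | PFst => GenTree.Node 3 [::]
  | PSnd => GenTree.Node 4 [::]
  | PComp f g => GenTree.Node 5 [:: prog_to_tree f; prog_to_tree g]
  | PPair f g => GenTree.Node 6 [:: prog_to_tree f; prog_to_tree g]
  | PRec f g => GenTree.Node 7 [:: prog_to_tree f; prog_to_tree g]
  | PMu f => GenTree.Node 8 [:: prog_to_tree f]
  end.

Fixpoint tree_to_prog (t : GenTree.tree nat) : option prog :=
  match t with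
  | GenTree.Leaf _ => None
  | GenTree.Node n ts =>
    match n, ts with
    | 0, [::] => Some PZero
    | 1, [::] => Some PSucc
    | 2, [::] => Some PId
    | 3, [::] => Some PFst
    | 4, [::] => Some PSnd
    | 5, [:: a; b] =>
        match tree_to_prog a, tree_to_prog b with
        | Some f, Some g => Some (PComp f g) | _, _ => None end
    | 6, [:: a; b] =>
        match tree_to_prog a, tree_to_prog b with
        | Some f, Some g => Some (PPair f g) | _, _ => None end
    | 7, [:: a; b] =>
        match tree_to_prog a, tree_to_prog b with
        | Some f, Some g => Some (PRec f g) | _, _ => None end
    | 8, [:: a] =>
        match tree_to_prog a with Some f => Some (PMu f) | None => None end
    | _, _ => None
    end
  end.

Lemma prog_to_treeK : pcancel prog_to_tree tree_to_prog.
Proof. by elim=> //= f -> // g ->. Qed.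

Definition prog_of (g : nat) : prog :=
  match unpickle g with
  | Some t => odflt PZero (tree_to_prog t)
  | None => PZero
  end.

Definition phi (g x v : nat) : Prop := eval (prog_of g) x v.

Definition halts (g x : nat) : Prop := exists v, phi g x v.

Definition same_fun (g g' : nat) : Prop := forall x v, phi g x v <-> phi g' x v.

Definition decidable_set (L : nat -> Prop) : Prop :=
  exists d, forall g, (L g -> phi d g 1) /\ (~ L g -> phi d g 0).

Definition captures (L : nat -> Prop) (psi : nat -> Prop) : Prop :=
  decidable_set L /\
  (forall g, L g -> psi g) /\
  (forall g', psi g' -> exists g, L g /\ same_fun g g').

Definition total_into (Safe : nat -> Prop) (g : nat) : Prop :=
  forall x, halts g x /\ (forall v, phi g x v -> Safe v).

(* If a decidable L consisted of total programs with values in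
   SafeInstance and contained a copy of every such program, then
     h x := if x \in L then (if phi_x(x) = a then b else a) else a
   would be such a program too, yet h differs from every phi_g with g \in L at
   the input g.  The real work is to show that h is a program of the language:
   it runs a universal stack machine, whose single step is primitive recursive,
   for the least number of steps after which it halts (such a number exists as
   the members of L are total), on the program obtained from the number x by
   replaying MathComp's [unpickle] on codes. *)

From Stdlib Require Import Cantor ClassicalEpsilon.
From mathcomp Require Import ssreflect ssrfun ssrbool eqtype ssrnat seq choice.

Set Implicit Arguments.
Unset Strict Implicit.

(** * Computable functions *)

Lemma cfst_pair a b : cfst (cpair a b) = a.
Proof. by rewrite /cfst /cpair Cantor.cancel_of_to. Qed.

Lemma csnd_pair a b : csnd (cpair a b) = b.
Proof. by rewrite /csnd /cpair Cantor.cancel_of_to. Qed.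

Lemma leq_add_cpair a b : a + b <= cpair a b.
Proof. apply/leP; rewrite /cpair addnC; exact: Cantor.to_nat_non_decreasing. Qed.

Arguments cfst : simpl never.
Arguments csnd : simpl never.
Arguments cpair : simpl never.

Definition computable (f : nat -> nat) : Prop := exists p, forall x, eval p x (f x).

Lemma computable_ext f g : computable f -> f =1 g -> computable g.
Proof. by move=> [p Hp] fg; exists p => x; rewrite -fg. Qed.

Lemma computable_id : computable id.
Proof. by exists PId; constructor. Qed.

Lemma computable_zero : computable (fun=> 0).
Proof. by exists PZero; constructor. Qed.

Lemma computable_fst : computable cfst.
Proof. by exists PFst; constructor. Qed.

Lemma computable_snd : computable csnd.
Proof. by exists PSnd; constructor. Qed.

Lemma computable_comp f g : computable f -> computable g -> computable (f \o g).
Proof. by move=> [pf Hf] [pg Hg]; exists (PComp pf pg) => x; econstructor. Qed.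

Lemma computable_succ f : computable f -> computable (fun x => (f x).+1).
Proof. by apply: computable_comp; exists PSucc; constructor. Qed.

Lemma computable_pair f g :
  computable f -> computable g -> computable (fun x => cpair (f x) (g x)).
Proof. by move=> [pf Hf] [pg Hg]; exists (PPair pf pg); constructor. Qed.

Fixpoint prim_rec (f : nat -> nat) (g : nat -> nat -> nat -> nat) (n y : nat) : nat :=
  if n is n'.+1 then g n' (prim_rec f g n' y) y else f y.

Lemma computable_prim_rec f g c :
  computable f -> computable (fun z => g (cfst (cfst z)) (csnd (cfst z)) (csnd z)) ->
  computable c -> computable (fun x => prim_rec f g (c x) x).
Proof.
move=> [pf Hf] [pg Hg] cc.
suff crec : computable (fun z => prim_rec f g (cfst z) (csnd z)).
  have := computable_comp crec (computable_pair cc computable_id).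
  by move/computable_ext; apply=> x /=; rewrite cfst_pair csnd_pair.
exists (PRec pf pg) => z; constructor; elim: (cfst z) => [|n IHn] /=; first exact: evr_0.
apply: evr_S IHn _; have := Hg (cpair (cpair n (prim_rec f g n (csnd z))) (csnd z)).
by rewrite !(cfst_pair, csnd_pair).
Qed.

Lemma computable_pred f : computable f -> computable (fun x => (f x).-1).
Proof.
move=> cf; have := computable_prim_rec (g := fun n _ _ => n) computable_zero
  (computable_comp computable_fst computable_fst) cf.
by move/computable_ext; apply=> x; case: (f x).
Qed.

Lemma computable_if c f g : computable c -> computable f -> computable g ->
  computable (fun x => if c x is 0 then f x else g x).
Proof.
move=> cc cf cg; have := computable_prim_rec (g := fun _ _ y => g y) cf
  (computable_comp cg computable_snd) cc.
by move/computable_ext; apply=> x; case: (c x).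
Qed.

Lemma computable_iter c i f : computable c -> computable i -> computable f ->
  computable (fun x => iter (c x) f (i x)).
Proof.
move=> cc ci cf; have := computable_prim_rec (g := fun _ r _ => f r) ci
  (computable_comp cf (computable_comp computable_snd computable_fst)) cc.
by move/computable_ext; apply=> x; elim: (c x) => //= n ->.
Qed.

Lemma computable_mu f (ex : forall x, exists n, f (cpair n x) == 0) :
  computable f -> computable (fun x => ex_minn (ex x)).
Proof.
move=> [p Hp]; exists (PMu p) => x; case: ex_minnP => n /eqP fn0 min_n.
constructor=> [|m lt_mn]; first by rewrite -fn0.
case E: (f (cpair m x)) (Hp (cpair m x)) => [|k]; last by exists k.
by have := min_n m; rewrite E leqNgt lt_mn => /(_ isT).
Qed.

Lemma eval_functional p x v (H : eval p x v) : forall w, eval p x w -> v = w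
with evalrec_functional f g n y v (H : evalrec f g n y v) :
  forall w, evalrec f g n y w -> v = w.
Proof.
- case: H => [x0|x0|x0|x0|x0|f g x0 u v0 Hg Hf|f g x0 a b Hf Hg|f g x0 v0 Hr|f x0 n H0 Hlt] w H';
    inversion H'; subst => //.
  + match goal with H1 : eval g x0 ?u', H2 : eval f ?u' w |- _ =>
      have E := eval_functional _ _ _ Hg _ H1; subst; exact: eval_functional _ _ _ Hf _ H2 end.
  + match goal with H1 : eval f x0 ?a', H2 : eval g x0 ?b' |- _ =>
      by rewrite (eval_functional _ _ _ Hf _ H1) (eval_functional _ _ _ Hg _ H2) end.
  + match goal with H1 : evalrec f g _ _ w |- _ => exact: evalrec_functional _ _ _ _ _ Hr _ H1 end.
  + case: (ltngtP n w) => // lt_nw.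
      case: (H2 n lt_nw) => k E; by have := eval_functional _ _ _ H0 _ E.
    case: (Hlt w lt_nw) => k E; by have := eval_functional _ _ _ E _ H1.
- case: H => [f0 g0 y0 v0 Hf|f0 g0 n0 y0 r v0 Hr Hg] w H'; inversion H'; subst.
  + match goal with H1 : eval f0 y0 w |- _ => exact: eval_functional _ _ _ Hf _ H1 end.
  + match goal with H1 : evalrec f0 g0 n0 y0 ?r', H2 : eval g0 _ w |- _ =>
      have Er := evalrec_functional _ _ _ _ _ Hr _ H1; subst;
      exact: eval_functional _ _ _ Hg _ H2 end.
Qed.

Lemma prog_of_pickle p : prog_of (pickle (prog_to_tree p)) = p.
Proof. by rewrite /prog_of pickleK /= prog_to_treeK. Qed.

Lemma computable_phi f : computable f -> exists h, forall x v, phi h x v <-> v = f x.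
Proof.
move=> [p Hp]; exists (pickle (prog_to_tree p)) => x v; rewrite /phi prog_of_pickle.
by split=> [/(eval_functional (Hp x)) | ->].
Qed.

Lemma decidable_set_indicator (L : nat -> Prop) :
  decidable_set L -> exists chi, computable chi /\ forall x, chi x != 0 <-> L x.
Proof.
move=> [d Hd]; exists (fun x => if excluded_middle_informative (L x) then 1 else 0).
split=> [|x]; last by case: excluded_middle_informative.
exists (prog_of d) => x.
by case: excluded_middle_informative => Lx; [exact: (Hd x).1 | exact: (Hd x).2].
Qed.

(** * A term language for computable functions *)

Inductive term : Type :=
  | TVar
  | TZero
  | TSucc of term
  | TPred of term
  | TPair of term & term
  | TFst of term
  | TSnd of term
  | TIf of term & term & term
  | TIter of term & term & (nat -> nat)
  | TLet of term & term
  | TApp of (nat -> nat) & term.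

(* [TIf c t e] takes the branch [t] when [c] evaluates to 0. *)
Fixpoint sem (t : term) (x : nat) : nat :=
  match t with
  | TVar => x
  | TZero => 0
  | TSucc t => (sem t x).+1
  | TPred t => (sem t x).-1
  | TPair t u => cpair (sem t x) (sem u x)
  | TFst t => cfst (sem t x)
  | TSnd t => csnd (sem t x)
  | TIf c t e => if sem c x is 0 then sem t x else sem e x
  | TIter c t f => iter (sem c x) f (sem t x)
  | TLet t u => sem u (sem t x)
  | TApp f t => f (sem t x)
  end.

Fixpoint wf_term (t : term) : Prop :=
  match t with
  | TVar | TZero => True
  | TSucc t | TPred t | TFst t | TSnd t => wf_term t
  | TPair t u | TLet t u => wf_term t /\ wf_term u
  | TIf c t e => [/\ wf_term c, wf_term t & wf_term e]
  | TIter c t f => [/\ wf_term c, wf_term t & computable f]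
  | TApp f t => computable f /\ wf_term t
  end.

Lemma computable_sem t : wf_term t -> computable (sem t).
Proof.
elim: t => /=.
- by move=> _; exact: computable_id.
- by move=> _; exact: computable_zero.
- by move=> t IH /IH; exact: computable_succ.
- by move=> t IH /IH; exact: computable_pred.
- by move=> t IHt u IHu [/IHt ? /IHu ?]; exact: computable_pair.
- by move=> t IH /IH; exact: computable_comp computable_fst.
- by move=> t IH /IH; exact: computable_comp computable_snd.
- by move=> c IHc t IHt e IHe [/IHc ? /IHt ? /IHe ?]; exact: computable_if.
- by move=> c IHc t IHt f [/IHc ? /IHt ? ?]; exact: computable_iter.
- by move=> t IHt u IHu [/IHt ? /IHu ?]; exact: computable_comp.
- by move=> f t IH [? /IH ?]; exact: computable_comp.
Qed.

Fixpoint TNum (n : nat) : term := if n is n'.+1 then TSucc (TNum n') else TZero.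

Lemma sem_TNum n x : sem (TNum n) x = n.
Proof. by elim: n => //= n ->. Qed.

Lemma wf_TNum n : wf_term (TNum n).
Proof. by elim: n. Qed.

Fixpoint TDrop (n : nat) (t : term) : term :=
  if n is n'.+1 then TSnd (TDrop n' t) else t.

Definition TNth (n : nat) (t : term) : term := TFst (TDrop n t).

Fixpoint TCase (t : term) (bs : seq term) (d : term) : term :=
  if bs is b :: bs' then TIf t b (TCase (TPred t) bs' d) else d.

Lemma sem_TCase t bs d x : sem (TCase t bs d) x = sem (nth d bs (sem t x)) x.
Proof.
elim: bs t => [|b bs IH] t /=; first by rewrite nth_nil.
by rewrite IH /=; case: (sem t x).
Qed.

Definition ncons (h t : nat) : nat := (cpair h t).+1.
Definition code_list (s : seq nat) : nat := foldr ncons 0 s.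

Definition THead (t : term) : term := TFst (TPred t).
Definition TTail (t : term) : term := TSnd (TPred t).
Definition TCons (h t : term) : term := TSucc (TPair h t).

Lemma size_le_code_list s : size s <= code_list s.
Proof.
elim: s => //= h t IH; rewrite /ncons ltnS (leq_trans IH) //.
by rewrite (leq_trans _ (leq_add_cpair h _)) // leq_addl.
Qed.

Lemma code_list_nil : code_list [::] = 0. Proof. by []. Qed.
Lemma code_list_cons h t : code_list (h :: t) = ncons h (code_list t). Proof. by []. Qed.

Lemma cfst0 : cfst 0 = 0. Proof. by []. Qed.
Lemma csnd0 : csnd 0 = 0. Proof. by []. Qed.

Ltac sem_simpl := repeat progress (
  rewrite ?cfst_pair ?csnd_pair ?cfst0 ?csnd0 ?sem_TNum ?sem_TCase ?nth_nil
          ?code_list_nil ?code_list_cons;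
  cbn [sem TNth TDrop THead TTail TCons ncons predn nth map]).

Definition subn_pair (z : nat) : nat := cfst z - csnd z.

Lemma computable_subn_pair : computable subn_pair.
Proof.
have := computable_iter computable_snd computable_fst (computable_pred computable_id).
move/computable_ext; apply=> z; rewrite /subn_pair.
by elim: (csnd z) => [|n /= ->]; rewrite ?subn0 ?subnS.
Qed.

Definition TIfEq (s t u v : term) : term :=
  TIf (TApp subn_pair (TPair s t)) (TIf (TApp subn_pair (TPair t s)) u v) v.

Lemma sem_TIfEq s t u v x :
  sem (TIfEq s t u v) x = if sem s x == sem t x then sem u x else sem v x.
Proof.
rewrite /= /subn_pair !(cfst_pair, csnd_pair).
case: ltngtP => [lt|lt|->]; last by rewrite subnn.
- have -> : sem s x - sem t x = 0 by apply/eqP; rewrite subn_eq0 ltnW.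
  by move: lt; rewrite -subn_gt0; case: (_ - _).
- by move: lt; rewrite -subn_gt0; case: (_ - _).
Qed.

Definition fold_step (F : nat -> nat) : nat -> nat :=
  let l := TNth 0 TVar in
  sem (TIf l TVar (TPair (TTail l) (TApp F (TPair (THead l) (TDrop 1 TVar))))).

(* The code of a list bounds its length, so that many steps of [fold_step]
   always exhaust the list. *)
Definition TFoldl (F : nat -> nat) (s a : term) : term :=
  TSnd (TIter s (TPair s a) (fold_step F)).

Lemma iter_fold_step F l acc k : size l <= k ->
  iter k (fold_step F) (cpair (code_list l) acc) =
  cpair 0 (foldl (fun acc h => F (cpair h acc)) acc l).
Proof.
elim: l acc k => [|h l IH] acc k /=.
  by move=> _; elim: k => //= k ->; rewrite /fold_step; sem_simpl.
case: k => // k; rewrite ltnS iterSr => /IH <-.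
by congr (iter _ _ _); rewrite /fold_step; sem_simpl.
Qed.

Lemma sem_TFoldl F s a x l : sem s x = code_list l ->
  sem (TFoldl F s a) x = foldl (fun acc h => F (cpair h acc)) (sem a x) l.
Proof.
by rewrite /TFoldl /= => ->; rewrite iter_fold_step ?size_le_code_list // csnd_pair.
Qed.

Create HintDb computable.
#[export] Hint Resolve wf_TNum : computable.
Ltac solve_wf := cbn [wf_term TNth TDrop THead TTail TCons TIfEq TFoldl TCase];
  repeat split; auto with computable.
#[export] Hint Extern 2 (computable (sem _)) => apply: computable_sem; solve_wf : computable.
#[export] Hint Resolve computable_subn_pair : computable.

Lemma computable_fold_step F : computable F -> computable (fold_step F).
Proof. by move=> cF; rewrite /fold_step; auto with computable. Qed.
#[export] Hint Resolve computable_fold_step : computable.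

(** * Decoding program numbers *)

Definition dstate (d v q r acc : nat) : nat := cpair d (cpair v (cpair q (cpair r acc))).

(* One step of [CodeSeq.decode_rec v q r] on the state [dstate d v q r acc],
   where [d] flags termination and [acc] codes the reversed output so far. *)
Definition seq_decode_step : nat -> nat :=
  let v := TNth 1 TVar in let q := TNth 2 TVar in let r := TNth 3 TVar in
  let acc := TDrop 4 TVar in
  let state d v q r acc := TPair d (TPair v (TPair q (TPair r acc))) in
  sem (TIf (TNth 0 TVar)
    (TIf q (state (TNum 1) v q r (TCons v acc))
      (TIf r (state TZero TZero (TPred q) (TPred q) (TCons v acc))
        (TIf (TPred r) (state TZero (TSucc v) (TPred q) (TPred q) acc)
          (state TZero v (TPred q) (TPred (TPred r)) acc))))
    TVar).

Lemma iter_seq_decode_step_done v q r acc k :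
  iter k seq_decode_step (dstate 1 v q r acc) = dstate 1 v q r acc.
Proof. by elim: k => //= k ->; rewrite /seq_decode_step /dstate; sem_simpl. Qed.

Lemma seq_decode_step_run v q r acc :
  seq_decode_step (dstate 0 v q r acc) =
  match q, r with
  | 0, _ => dstate 1 v 0 r (ncons v acc)
  | q'.+1, 0 => dstate 0 0 q' q' (ncons v acc)
  | q'.+1, 1 => dstate 0 v.+1 q' q' acc
  | q'.+1, r'.+2 => dstate 0 v q' r' acc
  end.
Proof.
rewrite /seq_decode_step /dstate; case: q => [|q]; first by sem_simpl.
by case: r => [|[|r]]; sem_simpl.
Qed.

Lemma iter_seq_decode_step q v r acc k : exists v' q' r',
  iter (q.+1 + k) seq_decode_step (dstate 0 v q r (code_list acc)) =
  dstate 1 v' q' r' (code_list (rev (CodeSeq.decode_rec v q r) ++ acc)).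
Proof.
elim: q v r acc => [|q IH] v r acc.
  by exists v, 0, r; rewrite add1n iterSr seq_decode_step_run iter_seq_decode_step_done.
rewrite addSn iterSr seq_decode_step_run; case: r => [|[|r]] /=.
- by have := IH 0 q (v :: acc); rewrite rev_cons cat_rcons.
- exact: IH.
- exact: IH.
Qed.

Definition seq_decode_rev : nat -> nat :=
  let init := TPair TZero (TPair TZero (TPair (TPred TVar) (TPair (TPred TVar) TZero))) in
  sem (TLet (TIter TVar init seq_decode_step) (TDrop 4 TVar)).

Lemma computable_seq_decode_rev : computable seq_decode_rev.
Proof. rewrite /seq_decode_rev /seq_decode_step; auto with computable. Qed.
#[export] Hint Resolve computable_seq_decode_rev : computable.

Lemma seq_decode_revE n : seq_decode_rev n = code_list (rev (CodeSeq.decode n)).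
Proof.
case: n => [|n]; first by rewrite /seq_decode_rev; sem_simpl.
have [v' [q' [r' E]]] := iter_seq_decode_step n 0 n [::] 0.
have -> : seq_decode_rev n.+1 = csnd (csnd (csnd (csnd
    (iter n.+1 seq_decode_step (dstate 0 0 n n (code_list [::])))))) by [].
by rewrite addn0 in E; rewrite E /dstate cats0; sem_simpl.
Qed.

Fixpoint prog_code (p : prog) : nat :=
  match p with
  | PZero => cpair 0 0
  | PSucc => cpair 1 0
  | PId => cpair 2 0
  | PFst => cpair 3 0
  | PSnd => cpair 4 0
  | PComp f g => cpair 5 (cpair (prog_code f) (prog_code g))
  | PPair f g => cpair 6 (cpair (prog_code f) (prog_code g))
  | PRec f g => cpair 7 (cpair (prog_code f) (prog_code g))
  | PMu f => cpair 8 (prog_code f)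
  end.

Definition oprog_code (o : option prog) : nat := if o is Some p then (prog_code p).+1 else 0.
Definition onat_code (o : option nat) : nat := if o is Some x then x.+1 else 0.
Definition osum_code (o : option (nat + nat)) : nat :=
  match o with
  | None => 0
  | Some (inl n) => (cpair 0 n).+1
  | Some (inr x) => (cpair 1 x).+1
  end.

Definition ohead_decode : nat -> nat :=
  sem (TFoldl (sem (TSucc (TNth 0 TVar))) (TApp seq_decode_rev TVar) TZero).

Lemma computable_ohead_decode : computable ohead_decode.
Proof. rewrite /ohead_decode; auto with computable. Qed.
#[export] Hint Resolve computable_ohead_decode : computable.

Lemma ohead_decodeE m : ohead_decode m = onat_code (ohead (CodeSeq.decode m)).
Proof.
rewrite /ohead_decode (@sem_TFoldl _ _ _ _ (rev (CodeSeq.decode m)));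
  last exact: seq_decode_revE.
by case: (CodeSeq.decode m) => //= x l; rewrite rev_cons foldl_rcons; sem_simpl.
Qed.

Lemma unpickle_treeE n : (unpickle n : option (GenTree.tree nat)) =
  GenTree.decode (pmap (@unpickle (nat + nat)%type) (CodeSeq.decode n)).
Proof. by []. Qed.

Lemma unpickle_sumE k : (unpickle k : option (nat + nat)) =
  if CodeSeq.decode k is [:: i; x] then
    sum_of_opair (ohead (CodeSeq.decode i), ohead (CodeSeq.decode x))
  else None.
Proof.
have pmap_unpickle s : pmap (@unpickle nat) s = s by elim: s => //= x s ->.
rewrite /unpickle /= /pcomp /= /unpickle /= /pcomp /= /unpickle /= /unpickle_tagged /=.
by case: (CodeSeq.decode k) => [|a [|b [|c l]]] //=; rewrite !pmap_unpickle.
Qed.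

Definition unpickle_sum_code : nat -> nat :=
  let l := TApp seq_decode_rev TVar in
  let i := TApp ohead_decode (THead (TTail TVar)) in
  let x := TApp ohead_decode (THead TVar) in
  sem (TLet l (TIf TVar TZero (TIf (TTail TVar) TZero (TIf (TTail (TTail TVar))
    (TIf x (TIf i TZero (TSucc (TPair TZero (TPred i)))) (TSucc (TPair (TNum 1) (TPred x))))
    TZero)))).

Lemma computable_unpickle_sum_code : computable unpickle_sum_code.
Proof. rewrite /unpickle_sum_code; auto with computable. Qed.
#[export] Hint Resolve computable_unpickle_sum_code : computable.

Lemma unpickle_sum_codeE k : unpickle_sum_code k = osum_code (unpickle k).
Proof.
rewrite unpickle_sumE /unpickle_sum_code; sem_simpl; rewrite seq_decode_revE.
case: (CodeSeq.decode k) => [|a [|b [|c l]]] //; sem_simpl => //.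
- rewrite !ohead_decodeE.
  by case: (ohead (CodeSeq.decode a)) => [x|]; case: (ohead (CodeSeq.decode b)) => [y|].
- have : 3 <= size (rev [:: a, b, c & l]) by rewrite size_rev.
  by case: (rev _) => [|x [|y [|z w]]] // _; sem_simpl.
Qed.

Definition node_prog (n : nat) (l : seq (option prog)) : option prog :=
  match n, l with
  | 0, [::] => Some PZero
  | 1, [::] => Some PSucc
  | 2, [::] => Some PId
  | 3, [::] => Some PFst
  | 4, [::] => Some PSnd
  | 5, [:: Some f; Some g] => Some (PComp f g)
  | 6, [:: Some f; Some g] => Some (PPair f g)
  | 7, [:: Some f; Some g] => Some (PRec f g)
  | 8, [:: Some f] => Some (PMu f)
  | _, _ => None
  end.

Lemma tree_to_progE n ts : tree_to_prog (GenTree.Node n ts) = node_prog n (map tree_to_prog ts).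
Proof.
do 9 (try case: n => [|n]); case: ts => [|a [|b [|c l]]] //=;
  by case: (tree_to_prog a) => [?|]; try case: (tree_to_prog b) => [?|].
Qed.

Definition TNullary (k : nat) : term := TIf (TDrop 1 TVar) (TSucc (TPair (TNum k) TZero)) TZero.

Definition TUnary (k : nat) : term :=
  let l := TDrop 1 TVar in
  TIf l TZero (TIf (TTail l)
    (TIf (THead l) TZero (TSucc (TPair (TNum k) (TPred (THead l)))))
    TZero).

Definition TBinary (k : nat) : term :=
  let l := TDrop 1 TVar in
  TIf l TZero (TIf (TTail l) TZero (TIf (TTail (TTail l))
    (TIf (THead l) TZero (TIf (THead (TTail l)) TZero
      (TSucc (TPair (TNum k) (TPair (TPred (THead l)) (TPred (THead (TTail l))))))))
    TZero)).

Definition node_prog_code : nat -> nat :=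
  sem (TCase (TNth 0 TVar) [:: TNullary 0; TNullary 1; TNullary 2; TNullary 3;
    TNullary 4; TBinary 5; TBinary 6; TBinary 7; TUnary 8] TZero).

Lemma computable_node_prog_code : computable node_prog_code.
Proof. rewrite /node_prog_code /TNullary /TUnary /TBinary; auto with computable. Qed.
#[export] Hint Resolve computable_node_prog_code : computable.

Lemma node_prog_codeE n l :
  node_prog_code (cpair n (code_list (map oprog_code l))) = oprog_code (node_prog n l).
Proof.
rewrite /node_prog_code /TNullary /TBinary /TUnary.
do 9 (try case: n => [|n]); case: l => [|a [|b [|c l]]];
  try case: a => [a|]; try case: b => [b|]; by sem_simpl.
Qed.

Definition code_trees (ts : seq (GenTree.tree nat)) : nat :=
  code_list (map oprog_code (map tree_to_prog ts)).

(* A tree is represented only through the program it decodes to; this is all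
   that [prog_of] looks at. *)
Definition tree_state_code (fs : seq (GenTree.tree nat) * seq (seq (GenTree.tree nat))) :
  nat :=
  cpair (code_trees fs.1) (code_list (map code_trees fs.2)).

Definition tree_decode_step : nat -> nat :=
  let c := TNth 0 TVar in let ts := TNth 1 TVar in let tss := TDrop 2 TVar in
  sem (TLet (TPair (TApp unpickle_sum_code c) (TDrop 1 TVar))
    (TIf c (TDrop 1 TVar)
      (TIf (TFst (TPred c))
        (TIf (TSnd (TPred c)) (TPair TZero (TCons ts tss))
          (TPair (TCons (TApp node_prog_code (TPair (TPred (TSnd (TPred c))) ts)) (THead tss))
                 (TTail tss)))
        (TPair (TCons TZero ts) tss)))).

Lemma computable_tree_decode_step : computable tree_decode_step.
Proof. rewrite /tree_decode_step; auto with computable. Qed.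
#[export] Hint Resolve computable_tree_decode_step : computable.

Lemma tree_decode_stepE k fs :
  tree_decode_step (cpair k (tree_state_code fs)) =
  tree_state_code (if unpickle k is Some c then GenTree.decode_step c fs else fs).
Proof.
rewrite /tree_decode_step; sem_simpl; rewrite unpickle_sum_codeE.
case: (unpickle k) => [[[|n]|y]|]; rewrite /tree_state_code /=; sem_simpl => //.
rewrite -/(code_trees _) node_prog_codeE -tree_to_progE.
by case: fs.2 => [|a l]; sem_simpl.
Qed.

Lemma foldl_tree_decode_step s :
  foldl (fun acc k => tree_decode_step (cpair k acc)) (cpair 0 0) (rev s) =
  tree_state_code (foldr (@GenTree.decode_step nat) ([::], [::]) (pmap unpickle s)).
Proof.
rewrite foldl_rev; elim: s => //= k s ->.
by rewrite tree_decode_stepE; case: (unpickle k).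
Qed.

Definition prog_code_of : nat -> nat :=
  let trees := TFst (TFoldl tree_decode_step (TApp seq_decode_rev TVar) (TPair TZero TZero)) in
  let zero_code := TPair TZero TZero in
  sem (TLet trees (TIf TVar zero_code (TIf (THead TVar) zero_code (TPred (THead TVar))))).

Lemma computable_prog_code_of : computable prog_code_of.
Proof. rewrite /prog_code_of; auto with computable. Qed.
#[export] Hint Resolve computable_prog_code_of : computable.

Lemma prog_code_ofE g : prog_code_of g = prog_code (prog_of g).
Proof.
rewrite /prog_code_of; cbn [sem].
rewrite (@sem_TFoldl _ _ _ _ (rev (CodeSeq.decode g))); last exact: seq_decode_revE.
rewrite foldl_tree_decode_step /prog_of unpickle_treeE /GenTree.decode.
case: (foldr _ _ _) => [[|t l] l2]; rewrite /tree_state_code /code_trees /=; sem_simpl => //.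
by case: (tree_to_prog t).
Qed.

(** * A universal stack machine *)

(* A stack machine for [eval]: [mstate K V] has a stack [K] of frames and a
   stack [V] of values.  [frame_eval p x] runs the program with code [p] on [x]
   and pushes the result; the other frames consume the values pushed above
   them: [frame_rec g i n y] finds R(i) on top of [V], [frame_mu f i x] finds
   the value of [f] at <i, x>. *)
Definition frame_eval (p x : nat) : nat := cpair 0 (cpair p x).
Definition frame_comp (f : nat) : nat := cpair 1 f.
Definition frame_pair : nat := cpair 2 0.
Definition frame_rec (g i n y : nat) : nat := cpair 3 (cpair g (cpair i (cpair n y))).
Definition frame_mu (f i x : nat) : nat := cpair 4 (cpair f (cpair i x)).
Definition mstate (K V : seq nat) : nat := cpair (code_list K) (code_list V).

Definition TFrameEval (p x : term) : term := TPair TZero (TPair p x).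

(* The environment is <p, <x, <K, V>>> for the frame [frame_eval p x]. *)
Definition mstep_eval : term :=
  let A := TSnd (TNth 0 TVar) in let X := TNth 1 TVar in
  let K := TNth 2 TVar in let V := TDrop 3 TVar in
  TCase (TFst (TNth 0 TVar)) [::
    TPair K (TCons TZero V);
    TPair K (TCons (TSucc X) V);
    TPair K (TCons X V);
    TPair K (TCons (TFst X) V);
    TPair K (TCons (TSnd X) V);
    TPair (TCons (TFrameEval (TSnd A) X) (TCons (TPair (TNum 1) (TFst A)) K)) V;
    TPair (TCons (TFrameEval (TFst A) X)
            (TCons (TFrameEval (TSnd A) X) (TCons (TPair (TNum 2) TZero) K))) V;
    TPair (TCons (TFrameEval (TFst A) (TSnd X))
            (TCons (TPair (TNum 3) (TPair (TSnd A) (TPair TZero (TPair (TFst X) (TSnd X))))) K)) V;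
    TPair (TCons (TFrameEval A (TPair TZero X))
            (TCons (TPair (TNum 4) (TPair A (TPair TZero X))) K)) V]
  (TPair K V).

(* The environment is <frame, <K, V>>. *)
Definition mstep_frame : term :=
  let D := TSnd (TNth 0 TVar) in let K := TNth 1 TVar in let V := TDrop 2 TVar in
  TCase (TFst (TNth 0 TVar)) [::
    TLet (TPair (TFst D) (TPair (TSnd D) (TPair K V))) mstep_eval;
    TPair (TCons (TFrameEval D (THead V)) K) (TTail V);
    TPair K (TCons (TPair (THead (TTail V)) (THead V)) (TTail (TTail V)));
    TIfEq (TNth 1 D) (TNth 2 D) (TPair K V)
      (TPair (TCons (TFrameEval (TNth 0 D) (TPair (TPair (TNth 1 D) (THead V)) (TDrop 3 D)))
               (TCons (TPair (TNum 3) (TPair (TNth 0 D) (TPair (TSucc (TNth 1 D)) (TDrop 2 D)))) K))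
             (TTail V));
    TIf (THead V) (TPair K (TCons (TNth 1 D) (TTail V)))
      (TPair (TCons (TFrameEval (TNth 0 D) (TPair (TSucc (TNth 1 D)) (TDrop 2 D)))
               (TCons (TPair (TNum 4) (TPair (TNth 0 D) (TPair (TSucc (TNth 1 D)) (TDrop 2 D)))) K))
             (TTail V))]
  (TPair K V).

Definition mstep : nat -> nat :=
  sem (TIf (TFst TVar) TVar
    (TLet (TPair (THead (TFst TVar)) (TPair (TTail (TFst TVar)) (TSnd TVar))) mstep_frame)).

Lemma computable_mstep : computable mstep.
Proof. rewrite /mstep /mstep_frame /mstep_eval; auto with computable. Qed.
#[export] Hint Resolve computable_mstep : computable.

Ltac mstep_simpl := rewrite /mstep /mstep_frame /mstep_eval /TFrameEval /mstate /frame_eval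
  /frame_comp /frame_pair /frame_rec /frame_mu; sem_simpl; rewrite ?sem_TIfEq; sem_simpl.

Lemma mstep_halted s : cfst s = 0 -> mstep s = s.
Proof. by move=> s0; rewrite /mstep; cbn [sem]; rewrite s0. Qed.

Lemma iter_mstep_halted s k : cfst s = 0 -> iter k mstep s = s.
Proof. by move=> s0; elim: k => //= k ->; exact: mstep_halted. Qed.

Lemma mstep_PZero x K V :
  mstep (mstate (frame_eval (prog_code PZero) x :: K) V) = mstate K (0 :: V).
Proof. by mstep_simpl. Qed.

Lemma mstep_PSucc x K V :
  mstep (mstate (frame_eval (prog_code PSucc) x :: K) V) = mstate K (x.+1 :: V).
Proof. by mstep_simpl. Qed.

Lemma mstep_PId x K V :
  mstep (mstate (frame_eval (prog_code PId) x :: K) V) = mstate K (x :: V).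
Proof. by mstep_simpl. Qed.

Lemma mstep_PFst x K V :
  mstep (mstate (frame_eval (prog_code PFst) x :: K) V) = mstate K (cfst x :: V).
Proof. by mstep_simpl. Qed.

Lemma mstep_PSnd x K V :
  mstep (mstate (frame_eval (prog_code PSnd) x :: K) V) = mstate K (csnd x :: V).
Proof. by mstep_simpl. Qed.

Lemma mstep_PComp f g x K V :
  mstep (mstate (frame_eval (prog_code (PComp f g)) x :: K) V) =
  mstate (frame_eval (prog_code g) x :: frame_comp (prog_code f) :: K) V.
Proof. by mstep_simpl. Qed.

Lemma mstep_comp f u K V :
  mstep (mstate (frame_comp f :: K) (u :: V)) = mstate (frame_eval f u :: K) V.
Proof. by mstep_simpl. Qed.

Lemma mstep_PPair f g x K V :
  mstep (mstate (frame_eval (prog_code (PPair f g)) x :: K) V) =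
  mstate (frame_eval (prog_code f) x :: frame_eval (prog_code g) x :: frame_pair :: K) V.
Proof. by mstep_simpl. Qed.

Lemma mstep_pair a b K V :
  mstep (mstate (frame_pair :: K) (b :: a :: V)) = mstate K (cpair a b :: V).
Proof. by mstep_simpl. Qed.

Lemma mstep_PRec f g x K V :
  mstep (mstate (frame_eval (prog_code (PRec f g)) x :: K) V) =
  mstate (frame_eval (prog_code f) (csnd x) :: frame_rec (prog_code g) 0 (cfst x) (csnd x) :: K) V.
Proof. by mstep_simpl. Qed.

Lemma mstep_rec_done g n y r K V :
  mstep (mstate (frame_rec g n n y :: K) (r :: V)) = mstate K (r :: V).
Proof. by mstep_simpl; rewrite eqxx. Qed.

Lemma mstep_rec g i n y r K V : i < n ->
  mstep (mstate (frame_rec g i n y :: K) (r :: V)) =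
  mstate (frame_eval g (cpair (cpair i r) y) :: frame_rec g i.+1 n y :: K) V.
Proof. by move=> lt_in; mstep_simpl; rewrite ltn_eqF. Qed.

Lemma mstep_PMu f x K V :
  mstep (mstate (frame_eval (prog_code (PMu f)) x :: K) V) =
  mstate (frame_eval (prog_code f) (cpair 0 x) :: frame_mu (prog_code f) 0 x :: K) V.
Proof. by mstep_simpl. Qed.

Lemma mstep_mu0 f i x K V : mstep (mstate (frame_mu f i x :: K) (0 :: V)) = mstate K (i :: V).
Proof. by mstep_simpl. Qed.

Lemma mstep_muS f i x k K V :
  mstep (mstate (frame_mu f i x :: K) (k.+1 :: V)) =
  mstate (frame_eval f (cpair i.+1 x) :: frame_mu f i.+1 x :: K) V.
Proof. by mstep_simpl. Qed.

Definition reaches (s s' : nat) : Prop := exists n, iter n mstep s = s'.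

Lemma reaches_refl s : reaches s s.
Proof. by exists 0. Qed.

Lemma reaches_trans s1 s2 s3 : reaches s1 s2 -> reaches s2 s3 -> reaches s1 s3.
Proof. by move=> [n <-] [m <-]; exists (m + n); rewrite iterD. Qed.

Lemma reaches_step s s' s'' : mstep s = s' -> reaches s' s'' -> reaches s s''.
Proof. by move=> E [n <-]; exists n.+1; rewrite iterSr E. Qed.

Lemma reaches_mu_loop f x n K V :
  (forall m, m < n -> exists k, forall K V,
     reaches (mstate (frame_eval f (cpair m x) :: K) V) (mstate K (k.+1 :: V))) ->
  reaches (mstate (frame_eval f (cpair 0 x) :: frame_mu f 0 x :: K) V)
          (mstate (frame_eval f (cpair n x) :: frame_mu f n x :: K) V).
Proof.
move=> loop; elim: n loop => [|n IHn] loop; first exact: reaches_refl.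
apply: reaches_trans (IHn (fun m lt_mn => loop m (ltnW lt_mn))) _.
have [k run_n] := loop n (ltnSn n).
apply: reaches_trans (run_n _ _) _.
by apply: reaches_step (mstep_muS _ _ _ _ _ _) (reaches_refl _).
Qed.

Lemma mstep_complete p x v (H : eval p x v) : forall K V,
  reaches (mstate (frame_eval (prog_code p) x :: K) V) (mstate K (v :: V))
with mstep_complete_rec f g m y v (H : evalrec f g m y v) : forall N K V, m <= N ->
  reaches (mstate (frame_eval (prog_code f) y :: frame_rec (prog_code g) 0 N y :: K) V)
          (mstate (frame_rec (prog_code g) m N y :: K) (v :: V)).
Proof.
- case: H => [x0|x0|x0|x0|x0|f g x0 u v0 Hg Hf|f g x0 a b Hf Hg|f g x0 v0 Hr|f x0 n H0 Hlt] K V.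
  + exact: reaches_step (mstep_PZero _ _ _) (reaches_refl _).
  + exact: reaches_step (mstep_PSucc _ _ _) (reaches_refl _).
  + exact: reaches_step (mstep_PId _ _ _) (reaches_refl _).
  + exact: reaches_step (mstep_PFst _ _ _) (reaches_refl _).
  + exact: reaches_step (mstep_PSnd _ _ _) (reaches_refl _).
  + apply: reaches_step (mstep_PComp _ _ _ _ _) _.
    apply: reaches_trans (mstep_complete _ _ _ Hg _ _) _.
    exact: reaches_step (mstep_comp _ _ _ _) (mstep_complete _ _ _ Hf _ _).
  + apply: reaches_step (mstep_PPair _ _ _ _ _) _.
    apply: reaches_trans (mstep_complete _ _ _ Hf _ _) _.
    apply: reaches_trans (mstep_complete _ _ _ Hg _ _) _.
    exact: reaches_step (mstep_pair _ _ _ _) (reaches_refl _).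
  + apply: reaches_step (mstep_PRec _ _ _ _ _) _.
    apply: reaches_trans (mstep_complete_rec _ _ _ _ _ Hr _ _ _ (leqnn _)) _.
    exact: reaches_step (mstep_rec_done _ _ _ _ _ _) (reaches_refl _).
  + apply: reaches_step (mstep_PMu _ _ _ _) _.
    apply: reaches_trans (reaches_mu_loop _ _ _) _.
      by move=> m /Hlt [k E]; exists k => K' V'; exact: mstep_complete _ _ _ E _ _.
    apply: reaches_trans (mstep_complete _ _ _ H0 _ _) _.
    exact: reaches_step (mstep_mu0 _ _ _ _ _) (reaches_refl _).
- case: H => [f0 g0 y0 v0 Hf|f0 g0 n y0 r v0 Hr Hg] N K V le_mN.
  + exact: mstep_complete _ _ _ Hf _ _.
  + apply: reaches_trans (mstep_complete_rec _ _ _ _ _ Hr _ _ _ (ltnW le_mN)) _.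
    apply: reaches_step; first exact: mstep_rec.
    exact: mstep_complete _ _ _ Hg _ _.
Qed.

(** * Diagonalization *)

Definition minit : nat -> nat :=
  sem (TPair (TCons (TFrameEval (TApp prog_code_of TVar) TVar) TZero) TZero).

Lemma minitE x : minit x = mstate [:: frame_eval (prog_code (prog_of x)) x] [::].
Proof. by rewrite /minit /TFrameEval /mstate /frame_eval; sem_simpl; rewrite prog_code_ofE. Qed.

Definition mrun (z : nat) : nat := iter (cfst z) mstep (minit (csnd z)).

Definition moutput : nat -> nat := sem (THead (TSnd TVar)).

Lemma computable_mrun : computable mrun.
Proof.
apply: computable_iter computable_fst _ computable_mstep.
by apply: computable_comp computable_snd; rewrite /minit; auto with computable.
Qed.
#[export] Hint Resolve computable_mrun : computable.

Lemma mrun_halted_state n x v : phi x x v -> cfst (mrun (cpair n x)) = 0 ->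
  mrun (cpair n x) = mstate [::] [:: v].
Proof.
rewrite /phi => /mstep_complete /(_ [::] [::]) [m]; rewrite -minitE => run_m halted_n.
have halted_m : cfst (iter m mstep (minit x)) = 0 by rewrite run_m /mstate cfst_pair.
rewrite /mrun cfst_pair csnd_pair in halted_n *; rewrite -run_m.
case: (leqP m n) => [le_mn | /ltnW le_nm].
- by rewrite -(subnK le_mn) iterD (iter_mstep_halted _ halted_m).
- by rewrite -(subnK le_nm) iterD (iter_mstep_halted _ halted_n).
Qed.

Section Diagonal.

Variables (chi : nat -> nat) (a b : nat).
Hypothesis computable_chi : computable chi.
Hypothesis chi_halts : forall x, chi x != 0 -> halts x x.

Definition diag_stop : nat -> nat :=
  sem (TIf (TApp chi (TSnd TVar)) TZero (TFst (TApp mrun TVar))).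

Lemma diag_stop_exists x : exists n, diag_stop (cpair n x) == 0.
Proof.
rewrite /diag_stop; case chi0: (chi x) (@chi_halts x) => [|k] halts_x.
  by exists 0; sem_simpl; rewrite chi0.
have [v /mstep_complete /(_ [::] [::]) [m run_m]] := halts_x isT.
by exists m; sem_simpl; rewrite chi0 /mrun cfst_pair csnd_pair minitE run_m /mstate cfst_pair.
Qed.

Definition diag_search (x : nat) : nat := ex_minn (diag_stop_exists x).

Definition diag : nat -> nat :=
  sem (TIf (TApp chi TVar) (TNum a)
    (TIfEq (TApp moutput (TApp mrun (TPair (TApp diag_search TVar) TVar)))
      (TNum a) (TNum b) (TNum a))).

Lemma computable_diag : computable diag.
Proof.
have : computable diag_search by apply: computable_mu; rewrite /diag_stop; auto with computable.
by rewrite /diag /moutput; auto with computable.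
Qed.

Lemma diag_values x : diag x = a \/ diag x = b.
Proof.
rewrite /diag; sem_simpl; rewrite sem_TIfEq; sem_simpl.
by case: (chi x) => [|?]; [|case: eqP]; auto.
Qed.

Lemma diag_differs x w : a <> b -> chi x != 0 -> phi x x w -> diag x <> w.
Proof.
move=> neq_ab chi_x phi_w; have halted : cfst (mrun (cpair (diag_search x) x)) = 0.
  rewrite /diag_search; case: ex_minnP => n + _; rewrite /diag_stop; sem_simpl.
  by case: (chi x) chi_x => // k _ /eqP.
rewrite /diag; sem_simpl; rewrite sem_TIfEq; sem_simpl.
rewrite /moutput (mrun_halted_state phi_w halted) /mstate; sem_simpl.
by case: (chi x) chi_x => // k _; case: eqP => [->|ne]; apply: nesym.
Qed.

End Diagonal.

Unset Implicit Arguments.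

Theorem mainTheorem9 (SafeInstance : nat -> Prop) :
  (exists a b, a <> b /\ SafeInstance a /\ SafeInstance b) ->
  ~ (exists L : nat -> Prop, captures L (total_into SafeInstance)).
Proof.
move=> [a [b [neq_ab [Sa Sb]]]] [L [decL [L_total total_L]]].
have [chi [computable_chi chiP]] := decidable_set_indicator decL.
have chi_halts x : chi x != 0 -> halts x x by move=> /chiP /L_total /(_ x) [].
pose d := diag a b chi_halts.
have [h hP] := computable_phi (computable_diag a b computable_chi chi_halts).
have [g [Lg same_gh]] : exists g, L g /\ same_fun g h.
  apply: total_L => x; split=> [|v /hP ->]; first by exists (d x); apply/hP.
  by case: (diag_values a b chi_halts x) => ->.
have phi_gg : phi g g (d g) by apply/same_gh/hP.
exact: diag_differs neq_ab ((chiP g).2 Lg) phi_gg erefl.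
Qed.
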